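(* Let $\mathcal{H}=(V,E)$ be a linear hypergraph with $n$ vertices and let $k=\mathrm{ar}(\mathcal{H})$ be its antirank. If $k^2>n$ then $$|E|\le \frac{n(k-1)}{k^2-n}\qquad\text{and}\qquad \Delta(\mathcal{H})\le k.$$
   Context: A hypergraph $\mathcal{H}=(V,E)$ has a finite vertex set $V$ and a finite set $E$ of nonempty subsets of $V$ (hyperedges). It is linear if $|e\cap e'|\le 1$ for all distinct $e,e'\in E$. The antirank $\mathrm{ar}(\mathcal{H})$ is the minimum cardinality of a hyperedge. $\Delta(\mathcal{H})$ is the maximum over vertices $x$ of the degree $\mathrm{deg}_{\mathcal{H}}(x)$, the number of hyperedges containing $x$. *)

From mathcomp Require Import all_boot all_order all_algebra.
Set Implicit Arguments. Unset Strict Implicit. Unset Printing Implicit Defensive.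

Definition hypergraph (V : finType) (E : {set {set V}}) : Prop :=
  forall e, e \in E -> e != set0.

Definition linear_hg (V : finType) (E : {set {set V}}) : Prop :=
  forall e e', e \in E -> e' \in E -> e != e' -> #|e :&: e'| <= 1.

Definition is_antirank (V : finType) (E : {set {set V}}) (k : nat) : Prop :=
  (exists2 e, e \in E & #|e| = k) /\ (forall e, e \in E -> k <= #|e|).

Definition hdeg (V : finType) (E : {set {set V}}) (x : V) : nat :=
  #|[set e in E | x \in e]|.

Definition maxdeg (V : finType) (E : {set {set V}}) : nat :=
  \max_(x : V) hdeg E x.

From mathcomp Require Import all_boot all_order all_algebra zify lra.
Import Order.TTheory GRing.Theory Num.Theory.
(* Let d x be the degree of x and n = #|V|.  Counting incidences,
   S = \sum_x d x = \sum_e #|e| >= #|E| k, and since two distinct edges meet in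
   at most one vertex, \sum_x d x (d x - 1) <= #|E| (#|E| - 1).  Cauchy-Schwarz
   gives S^2 <= n \sum_x d x ^ 2, hence S^2 - n S <= n #|E| (#|E| - 1).  As
   s |-> s^2 - n s is increasing beyond n/2 and negative on (0, n), the same
   holds with S replaced by #|E| k, which rearranges to the bound on #|E|.
   The edges through x are disjoint away from x, so d x (k - 1) <= n - 1 < k^2 - 1,
   which bounds the degree. *)

Set Implicit Arguments.
Unset Strict Implicit.
Unset Printing Implicit Defensive.

Section DoubleCounting.

Variable V : finType.

Lemma sum_hdeg_weighted (D : {set {set V}}) (A : {set V}) (f : V -> nat) :
  \sum_(x in A) hdeg D x * f x = \sum_(e in D) \sum_(x in e :&: A) f x.
Proof.
transitivity (\sum_(x in A) \sum_(e in D | x \in e) f x).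
  apply: eq_bigr => x _; rewrite sum_nat_const; congr (_ * _).
  by apply: eq_card => e; rewrite inE.
rewrite (exchange_big_dep (fun e => e \in D)) /=; last by move=> x e _ /andP[].
apply: eq_bigr => e eD; apply: eq_bigl => x.
by rewrite inE eD andbC.
Qed.

Lemma sum_hdeg (D : {set {set V}}) : \sum_x hdeg D x = \sum_(e in D) #|e|.
Proof.
have := sum_hdeg_weighted D setT (fun=> 1).
under eq_bigr do rewrite muln1.
under [in X in _ = X -> _]eq_bigr do rewrite sum1_card setIT.
by rewrite (eq_bigl predT) // => x; rewrite inE.
Qed.

Lemma hdeg_setD1 (D : {set {set V}}) (e : {set V}) (x : V) :
  e \in D -> x \in e -> hdeg D x = (hdeg (D :\ e) x).+1.
Proof.
move=> eD xe; rewrite /hdeg (cardsD1 e) inE eD xe add1n; congr _.+1.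
by apply: eq_card => e'; rewrite !inE andbA.
Qed.

End DoubleCounting.

Section LinearHypergraph.

Variables (V : finType) (E : {set {set V}}).
Hypothesis linE : linear_hg E.

Lemma card_edges_through2_le1 (x y : V) :
  x != y -> #|[set e in E | (x \in e) && (y \in e)]| <= 1.
Proof.
move=> neq_xy; apply/card_le1_eqP => e1 e2; rewrite !inE.
move=> /and3P[e1E xe1 ye1] /and3P[e2E xe2 ye2].
apply/eqP; apply: contraNT neq_xy => neq_e12.
move/card_le1_eqP: (linE e2E e1E neq_e12) => /(_ x y); rewrite !inE.
by rewrite xe1 xe2 ye1 ye2 => /(_ isT isT) ->.
Qed.

Lemma hdeg_mul_pred_le (k : nat) (x : V) :
  (forall e, e \in E -> k <= #|e|) -> hdeg E x * (k - 1) <= #|V| - 1.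
Proof.
move=> k_le; set D := [set e in E | x \in e].
have := sum_hdeg_weighted D [set~ x] (fun=> 1).
under eq_bigr do rewrite muln1.
under [in X in _ = X -> _]eq_bigr do rewrite sum1_card.
move=> double_count.
apply: (@leq_trans (\sum_(e in D) #|e :&: [set~ x]|)).
  rewrite -sum_nat_const; apply: leq_sum => e; rewrite inE => /andP[eE xe].
  have := k_le e eE; rewrite (cardsD1 x e) xe setDE; lia.
rewrite -double_count subn1 -(cardsC1 x) -sum1_card; apply: leq_sum => y.
rewrite !inE eq_sym => neq_xy.
apply: leq_trans (card_edges_through2_le1 neq_xy); apply: subset_leq_card.
by apply/subsetP => e; rewrite !inE andbA.
Qed.

Lemma hdeg_le_antirank (k : nat) (x : V) :
  (forall e, e \in E -> k <= #|e|) -> #|V| < k ^ 2 -> hdeg E x <= k.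
Proof.
move=> k_le n_lt_k2; have := hdeg_mul_pred_le x k_le.
have : 0 < #|V| by apply/card_gt0P; exists x.
nia.
Qed.

Lemma sum_hdeg_pairs_le :
  \sum_x hdeg E x * (hdeg E x - 1) <= #|E| * (#|E| - 1).
Proof.
have := sum_hdeg_weighted E setT (fun x => hdeg E x - 1).
rewrite (eq_bigl predT) => [->|x]; last by rewrite inE.
rewrite -sum_nat_const; apply: leq_sum => e eE.
have -> : #|E| - 1 = #|E :\ e| by rewrite (cardsD1 e E) eE add1n subn1.
under eq_bigr => x /setIP[xe _] do rewrite (hdeg_setD1 eE xe) subn1 -[_.-1]muln1.
rewrite setIT sum_hdeg_weighted -sum1_card; apply: leq_sum => e'.
by rewrite sum1_card => /setD1P[neq_e'e e'E]; apply: linE.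
Qed.

End LinearHypergraph.

Lemma sqr_sum_le (I : finType) (F : I -> nat) :
  (\sum_i F i) ^ 2 <= #|I| * \sum_i F i ^ 2.
Proof.
rewrite -(leq_pmul2l (isT : 0 < 2)).
have -> : (\sum_i F i) ^ 2 = \sum_i \sum_j F i * F j.
  by rewrite -mulnn big_distrl /=; apply: eq_bigr => i _; rewrite big_distrr.
have -> : 2 * (#|I| * \sum_i F i ^ 2) = \sum_i \sum_j (F i ^ 2 + F j ^ 2).
  symmetry; under eq_bigr => i _ do rewrite big_split /= sum_nat_const.
  by rewrite big_split /= -big_distrr /= sum_nat_const addnn -mul2n.
rewrite big_distrr /=; apply: leq_sum => i _; rewrite big_distrr /=; apply: leq_sum => j _.
exact: (nat_Cauchy (F i) (F j)).1.
Qed.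

Section EdgeCountArith.
Local Open Scope ring_scope.

Lemma edge_count_bound (R : realDomainType) (n m k S Q : R) :
  0 <= n -> 0 < m -> 0 <= k -> 0 <= Q -> m * k <= S -> Q <= m * (m - 1) ->
  S ^+ 2 <= n * (Q + S) -> m * (k ^+ 2 - n) <= n * (k - 1).
Proof.
move=> n_ge0 m_gt0 k_ge0 Q_ge0 mk_le_S Q_le S2_le.
have mk_sqrB_le : (m * k) ^+ 2 - n * (m * k) <= n * (m * (m - 1)).
  have nQ_le : n * Q <= n * (m * (m - 1)) by rewrite ler_wpM2l.
  have [mk_le_n | n_lt_mk] := lerP (m * k) n.
    have : m * k * (m * k - n) <= 0.
      by rewrite mulr_ge0_le0 ?mulr_ge0 ?subr_le0 // ltW.
    have : 0 <= n * Q by rewrite mulr_ge0.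
    nra.
  have : 0 <= (S - m * k) * (S + m * k - n) by apply: mulr_ge0; nra.
  nra.
rewrite -(ler_pM2l m_gt0); nra.
Qed.

End EdgeCountArith.

Theorem lemma3p1 (V : finType) (E : {set {set V}}) (k : nat) :
  hypergraph E -> linear_hg E -> is_antirank E k ->
  #|V| < k ^ 2 ->
  ((#|E|%:R : rat) <= (#|V| * (k - 1))%:R / ((k ^ 2)%:R - #|V|%:R))%R
  /\ maxdeg E <= k.
Proof.
move=> E_nonempty_edges linE [[e0 e0E card_e0] k_le] n_lt_k2.
have [x0 x0e0] : exists x, x \in e0 by apply/set0Pn; exact: E_nonempty_edges.
have k_gt0 : 0 < k by rewrite -card_e0; apply/card_gt0P; exists x0.
have m_gt0 : 0 < #|E| by apply/card_gt0P; exists e0.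
split; last first.
  by apply/bigmax_leqP => x _; exact: hdeg_le_antirank.
set S := \sum_x hdeg E x; set Q := \sum_x hdeg E x * (hdeg E x - 1).
have S_ge : #|E| * k <= S by rewrite /S sum_hdeg -sum_nat_const leq_sum.
have Q_le : Q <= #|E| * (#|E| - 1) := sum_hdeg_pairs_le linE.
have S2_le : S ^ 2 <= #|V| * (Q + S).
  apply: leq_trans (sqr_sum_le _) _; rewrite -big_split leq_mul2l; apply/orP; right.
  by apply/eq_leq/eq_bigr => x _; case: (hdeg E x) => // d; rewrite /= subn1 -mulnSr mulnn.
rewrite ler_pdivlMr ?subr_gt0 ?ltr_nat // natrM natrB // natrX.
apply: (edge_count_bound (S := S%:R) (Q := Q%:R)); rewrite ?ler0n ?ltr0n //.
- by rewrite -natrM ler_nat.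
- by move: Q_le; rewrite -(ler_nat rat) natrM natrB.
- by rewrite -natrX -natrD -natrM ler_nat.
Qed.
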